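(* Let $F=P_{\ell_1}\cup\cdots\cup P_{\ell_k}$ be a linear forest with $k\ge2$, $\ell_1\ge\cdots\ge\ell_k\ge2$ and $\ell_i\ne 3$ for all $i$. If $P_{2\delta_F+1}\cup P_{\delta_F+1}$ is $F$-free, then $F=2P_\ell$ for some odd $\ell$. Moreover, in that case $P_{2\delta_F+1}\cup P_{\delta_F+2}$ contains $F$ as a subgraph.
   Context: $P_m$ is the path on $m$ vertices; $G\cup H$ is disjoint union and $tG$ is $t$ disjoint copies of $G$. $\delta_F=\sum_{i=1}^k\lfloor \ell_i/2\rfloor-1$. A graph is $F$-free if it has no subgraph isomorphic to $F$. *)

From mathcomp Require Import all_boot.
Set Implicit Arguments. Unset Strict Implicit. Unset Printing Implicit Defensive.

(* A linear forest P_{l_0} ∪ ... ∪ P_{l_{k-1}} is encoded by the sequence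
   s = [:: l_0; ...; l_{k-1}] of path orders. *)
Definition lf_vert (s : seq nat) (v : nat * nat) : bool :=
  (v.1 < size s) && (v.2 < nth 0 s v.1).

Definition lf_edge (s : seq nat) (u v : nat * nat) : bool :=
  [&& lf_vert s u, lf_vert s v, u.1 == v.1 &
      (u.2.+1 == v.2) || (v.2.+1 == u.2)].

Definition lf_subgraph (s t : seq nat) : Prop :=
  exists f : nat * nat -> nat * nat,
    {in lf_vert s &, injective f} /\
    (forall v, lf_vert s v -> lf_vert t (f v)) /\
    (forall u v, lf_edge s u v -> lf_edge t (f u) (f v)).

Definition lf_free (t s : seq nat) : Prop := ~ lf_subgraph s t.

Definition deltaF (s : seq nat) : nat := (\sum_(l <- s) l./2) - 1.

From mathcomp Require Import all_boot zify.
Set Implicit Arguments. Unset Strict Implicit. Unset Printing Implicit Defensive.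

(* Let F = P_{l_1} ∪ ... ∪ P_{l_k} with l_1 >= ... >= l_k, all l_i >= 2 and
   l_i <> 3, and write S = sum_i floor(l_i/2), N = #{i | l_i odd}, so that
   |F| = 2S + N, delta_F = S - 1 and 2N <= S (an odd l_i is at least 5).
   Unless F = 2P_l with l odd, F embeds in P_{2S-1} ∪ P_S: put P_{l_1} in the
   long path, take the shortest prefix of P_{l_2}, ..., P_{l_k} whose total
   order exceeds N and put it in the short path, and the remaining paths in
   the long one.  That prefix has order at most max(l_2, 2N) <= S, and what is
   left for the long path has order at most 2S + N - (N + 1) = 2S - 1.
   For F = 2P_l (l odd) one checks directly that F embeds in
   P_{2 delta_F + 1} ∪ P_{delta_F + 2}. *)

Definition lf_embedding (s t : seq nat) (f : nat * nat -> nat * nat) : Prop :=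
  [/\ {in lf_vert s &, injective f},
      forall v, lf_vert s v -> lf_vert t (f v) &
      forall u v, lf_edge s u v -> lf_edge t (f u) (f v)].

Lemma lf_subgraphP s t : lf_subgraph s t <-> exists f, lf_embedding s t f.
Proof. by split=> [[f [? [? ?]]]|[f [? ? ?]]]; exists f. Qed.

Lemma lf_embedding_comp s t u f g :
  lf_embedding s t f -> lf_embedding t u g -> lf_embedding s u (g \o f).
Proof.
move=> [fI fV fE] [gI gV gE]; split.
- move=> v w vs ws /= /gI; rewrite !unfold_in => /(_ (fV v vs) (fV w ws)).
  exact: fI.
- by move=> v /fV /gV.
- by move=> v w /fE /gE.
Qed.

Lemma lf_vert_cat s1 s2 v : lf_vert (s1 ++ s2) v =
  if v.1 < size s1 then lf_vert s1 v else lf_vert s2 (v.1 - size s1, v.2).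
Proof.
rewrite /lf_vert nth_cat size_cat /=; case: (ltnP v.1 (size s1)) => v1 /=; lia.
Qed.

Lemma lf_edge_cat s1 s2 u v : lf_edge (s1 ++ s2) u v ->
  if u.1 < size s1 then lf_edge s1 u v
  else lf_edge s2 (u.1 - size s1, u.2) (v.1 - size s1, v.2).
Proof.
move=> /and4P [uV vV /eqP uv adj]; move: uV vV.
rewrite /lf_edge !lf_vert_cat -uv.
by case: ifP => _ -> ->; rewrite eqxx.
Qed.

Lemma lf_embedding_cat s1 s2 t f g :
  lf_embedding s1 t f -> lf_embedding s2 t g ->
  (forall v w, lf_vert s1 v -> lf_vert s2 w -> f v != g w) ->
  lf_embedding (s1 ++ s2) t
    (fun v => if v.1 < size s1 then f v else g (v.1 - size s1, v.2)).
Proof.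
move=> [fI fV fE] [gI gV gE] disj; split.
- move=> v w; rewrite -!topredE /= !lf_vert_cat.
  case: ifP => v1; case: ifP => w1 vV wV.
  + exact: fI.
  + by move=> vw; have := disj _ _ vV wV; rewrite vw eqxx.
  + by move=> vw; have := disj _ _ wV vV; rewrite vw eqxx.
  + move/gI; rewrite -!topredE => /(_ vV wV) [e1 e2].
    case: v w v1 w1 e1 e2 {vV wV} => [i j] [i' j'] /= ? ? ? ->.
    by congr (_, _); lia.
- by move=> v; rewrite lf_vert_cat; case: ifP => _; [apply: fV|apply: gV].
- move=> u v e; have uv : u.1 = v.1 by case/and4P: e => _ _ /eqP.
  by move/lf_edge_cat: e; rewrite -uv; case: ifP => _; [apply: fE|apply: gE].
Qed.

Lemma lf_embedding_id s t : size s <= size t ->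
  (forall i, i < size s -> nth 0 s i <= nth 0 t i) -> lf_embedding s t id.
Proof.
move=> st nth_le.
have vst v : lf_vert s v -> lf_vert t v.
  by move=> /andP [i_lt j_lt]; have := nth_le _ i_lt; rewrite /lf_vert; lia.
split=> // u v /and4P [uV vV ? ?]; apply/and4P; split=> //; exact: vst.
Qed.

Lemma lf_vert2 x y w : lf_vert [:: x; y] w =
  ((w.1 == 0) && (w.2 < x)) || ((w.1 == 1) && (w.2 < y)).
Proof. by case: w => [[|[|i]] j]; rewrite /lf_vert /= ?orbF. Qed.

Lemma lf_embedding_swap x y :
  lf_embedding [:: x; y] [:: y; x] (fun w => (1 - w.1, w.2)).
Proof.
split.
- move=> [i j] [i' j']; rewrite -!topredE /= !lf_vert2 /= => ? ? [? ->].
  congr (_, _); lia.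
- by move=> [i j]; rewrite !lf_vert2 /=; lia.
- by move=> [i j] [i' j']; rewrite /lf_edge !lf_vert2 /=; lia.
Qed.

Definition lf_shift (x y : nat) (w : nat * nat) : nat * nat :=
  (w.1, nth 0 [:: x; y] w.1 + w.2).

Lemma lf_embedding_shift x1 y1 x2 y2 :
  lf_embedding [:: x2; y2] [:: x1 + x2; y1 + y2] (lf_shift x1 y1).
Proof.
split.
- move=> [i j] [i' j']; rewrite -!topredE /= !lf_vert2 /lf_shift /=.
  by case: i => [|[|i]]; case: i' => [|[|i']] //= _ _ [] => /addnI ->.
- by move=> [[|[|i]] j]; rewrite !lf_vert2 /=; lia.
- by move=> [[|[|i]] j] [[|[|i']] j']; rewrite /lf_edge !lf_vert2 /=; lia.
Qed.

Lemma lf_subgraph_cat s1 s2 x1 y1 x2 y2 :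
  lf_subgraph s1 [:: x1; y1] -> lf_subgraph s2 [:: x2; y2] ->
  lf_subgraph (s1 ++ s2) [:: x1 + x2; y1 + y2].
Proof.
move=> /lf_subgraphP [f hf] /lf_subgraphP [g hg]; apply/lf_subgraphP.
have widen : lf_embedding [:: x1; y1] [:: x1 + x2; y1 + y2] id.
  by apply: lf_embedding_id => // [[|[|i]]] //= _; apply: leq_addr.
have [_ fV _] := hf; have [_ gV _] := hg.
have hg' := lf_embedding_comp hg (lf_embedding_shift x1 y1 x2 y2).
eexists; apply: lf_embedding_cat (lf_embedding_comp hf widen) hg' _.
move=> v w /fV + /gV; rewrite /= /lf_shift !lf_vert2.
case: (f v) (g w) => [i j] [[|[|i']] j'] /=; rewrite xpair_eqE; lia.
Qed.

Lemma lf_subgraph_widen s x y x' y' :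
  lf_subgraph s [:: x; y] -> x <= x' -> y <= y' -> lf_subgraph s [:: x'; y'].
Proof.
move=> /lf_subgraphP [f hf] le_x le_y; apply/lf_subgraphP; exists (id \o f).
by apply: lf_embedding_comp hf (lf_embedding_id _ _) => // [[|[|i]]].
Qed.

Lemma lf_subgraph_path_left u : lf_subgraph u [:: sumn u; 0].
Proof.
elim: u => [|a u IH].
  by apply/lf_subgraphP; exists id; apply: lf_embedding_id.
have single : lf_subgraph [:: a] [:: a; 0].
  by apply/lf_subgraphP; exists id; apply: lf_embedding_id => // [[|i]].
exact: lf_subgraph_cat single IH.
Qed.

Lemma lf_subgraph_path_right u : lf_subgraph u [:: 0; sumn u].
Proof.
have /lf_subgraphP [f hf] := lf_subgraph_path_left u.
apply/lf_subgraphP; eexists.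
exact: lf_embedding_comp hf (lf_embedding_swap _ _).
Qed.

Definition admissible (l : nat) : bool := (2 <= l) && (l != 3).

Lemma sumn_halves s : sumn s = (\sum_(l <- s) l./2).*2 + count odd s.
Proof. elim: s => [|l s IH]; rewrite ?big_nil ?big_cons //=; lia. Qed.

Lemma size_le_halves s : all admissible s -> size s <= \sum_(l <- s) l./2.
Proof.
elim: s => [|l s IH]; rewrite ?big_nil ?big_cons //=.
by move=> /andP [/andP [? ?] /IH]; lia.
Qed.

(* 2N <= S, since every allowed odd order is at least 5. *)
Lemma count_odd_le_halves s :
  all admissible s -> (count odd s).*2 <= \sum_(l <- s) l./2.
Proof.
elim: s => [|l s IH]; rewrite ?big_nil ?big_cons //=.
by move=> /andP [/andP [? ?] /IH]; lia.
Qed.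

Lemma second_le_halves a b r : b <= a -> all admissible r ->
  ~~ [&& r == [::], a == b & odd a] -> b <= \sum_(l <- a :: b :: r) l./2.
Proof.
rewrite !big_cons => le_ba /size_le_halves; case: r => [|c r] /=.
  by rewrite big_nil; case: eqVneq => [->|]; lia.
lia.
Qed.

(* Greedy choice: if the head b of b :: r bounds all its entries and the
   total exceeds N, the shortest prefix with total exceeding N has total at
   most max(b, 2N) (a prefix of length >= 2 already contains b). *)
Lemma greedy_prefix b r N : all (fun c => c <= b) r -> N < sumn (b :: r) ->
  exists m, N < sumn (take m (b :: r)) <= maxn b N.*2.
Proof.
set t := b :: r => r_le N_lt.
have ex : exists m, N < sumn (take m t) by exists (size t); rewrite take_size.
have [m N_lt_m m_min] := ex_minnP ex; exists m; rewrite N_lt_m /=.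
case: m N_lt_m m_min => [|m]; first by rewrite take0.
have [m_lt|m_ge] := ltnP m (size t); last first.
  by move=> _ /(_ (size t)); rewrite take_size => /(_ N_lt); lia.
rewrite (take_nth 0 m_lt) sumn_rcons => N_lt_m m_min.
have le_N : sumn (take m t) <= N.
  by rewrite leqNgt; apply/negP => /m_min; rewrite ltnn.
case: m m_lt {m_min N_lt_m} le_N => [|m] m_lt le_N.
  by rewrite take0 /= leq_maxl.
have nth_le : nth 0 t m.+1 <= b by apply: (allP r_le); apply: mem_nth.
have b_le : b <= sumn (take m.+1 t) by rewrite /= leq_addr.
lia.
Qed.

Lemma pair_embedding l : admissible l ->
  lf_subgraph [:: l; l] [:: (deltaF [:: l; l]).*2.+1; (deltaF [:: l; l]).+2].
Proof.
rewrite /deltaF !big_cons big_nil => adm_l; apply/lf_subgraphP; exists id.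
apply: lf_embedding_id => // [[|[|i]]] //= _;
  by move: adm_l; rewrite /admissible; lia.
Qed.

Lemma embedding_unless_odd_pair a b r :
  sorted (fun x y => y <= x) [:: a, b & r] -> all admissible [:: a, b & r] ->
  ~~ [&& r == [::], a == b & odd a] ->
  lf_subgraph [:: a, b & r]
    [:: (deltaF [:: a, b & r]).*2.+1; (deltaF [:: a, b & r]).+1].
Proof.
move=> /andP [le_ba path_r] adm not_pair; rewrite /deltaF.
set t := b :: r; set S := \sum_(l <- a :: t) l./2.
have adm_t : all admissible t by case/andP: adm.
have adm_r : all admissible r by case/and3P: adm.
have r_le : all (fun c => c <= b) r.
  by apply: order_path_min path_r => x y z /= le_yx /leq_trans; apply.
have N_lt : count odd (a :: t) < sumn t.
  by have := sumn_halves t; have := size_le_halves adm_t; rewrite /= -/t; lia.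
have [m /andP [N_lt_m take_le]] := greedy_prefix r_le N_lt.
rewrite -/t in N_lt_m take_le.
have b_le : b <= S := second_le_halves le_ba adm_r not_pair.
have odd_le : (count odd (a :: t)).*2 <= S := count_odd_le_halves adm.
have sum_s : a + sumn t = S.*2 + count odd (a :: t) := sumn_halves (a :: t).
have sum_t : sumn t = sumn (take m t) + sumn (drop m t).
  by rewrite -sumn_cat cat_take_drop.
have pieces := lf_subgraph_cat (lf_subgraph_cat (lf_subgraph_path_left [:: a])
  (lf_subgraph_path_right (take m t))) (lf_subgraph_path_left (drop m t)).
rewrite -catA cat_take_drop in pieces.
by apply: lf_subgraph_widen pieces _ _; rewrite ?[sumn [:: a]]/=; lia.
Qed.

Theorem mainTheorem5 (s : seq nat) :
  2 <= size s ->
  sorted (fun a b => b <= a) s ->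
  all (fun l => (2 <= l) && (l != 3)) s ->
  lf_free [:: (deltaF s).*2.+1; (deltaF s).+1] s ->
  (exists l, odd l /\ s = [:: l; l]) /\
  lf_subgraph s [:: (deltaF s).*2.+1; (deltaF s).+2].
Proof.
case: s => [|a [|b r]] // _ sorted_s adm free.
have [/and3P [/eqP r0 /eqP ab odd_a]|not_pair] :=
  boolP [&& r == [::], a == b & odd a].
  subst r b; split; first by exists a.
  by apply: pair_embedding; case/andP: adm.
by exfalso; apply/free/embedding_unless_odd_pair.
Qed.
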